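(* If degree sequences $e$ and $d$ satisfy $e\preccurlyeq d$ in the Rao order, then $\Delta_{m(e)}(e)\le \Delta_{m(d)}(d)$.
   Context: Degree sequences (of finite simple graphs with at least one vertex) are listed in nonincreasing order. For such $d$, $m(d)=\max\{i : d_i\ge i-1\}$ and, for integers $k\ge 0$, $\Delta_k(d)=k(k-1)+\sum_{i>k}\min\{k,d_i\}-\sum_{i\le k}d_i$. Rao order: $e\preccurlyeq d$ if there exist a realization $H$ of $e$ and a realization $G$ of $d$ such that $H$ is an induced subgraph of $G$. *)

From mathcomp Require Import all_boot all_order all_algebra.
Set Implicit Arguments. Unset Strict Implicit. Unset Printing Implicit Defensive.

Definition simple_graph (n : nat) (g : rel 'I_n) : Prop :=
  irreflexive g /\ symmetric g.

Definition gdeg (n : nat) (g : rel 'I_n) (v : 'I_n) : nat := #|[pred u | g v u]|.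

Definition degseq (n : nat) (g : rel 'I_n) : seq nat :=
  sort geq [seq gdeg g v | v <- enum 'I_n].

Definition realizes (n : nat) (g : rel 'I_n) (d : seq nat) : Prop :=
  simple_graph g /\ degseq g = d.

Definition is_degseq (d : seq nat) : Prop :=
  exists (n : nat) (g : rel 'I_n), 0 < n /\ realizes g d.

(* Rao order: e ≼ d iff some realization H of e is an induced subgraph of some
   realization G of d (i.e. H is isomorphic, via an injective vertex map f, to
   the subgraph of G induced on the image of f). *)
Definition rao_le (e d : seq nat) : Prop :=
  exists (p n : nat) (h : rel 'I_p) (g : rel 'I_n) (f : 'I_p -> 'I_n),
    [/\ realizes h e, realizes g d, injective f &
        forall x y, h x y = g (f x) (f y)].

(* d_i with 1-based index i is nth 0 d (i-1).
   m(d) = max{ i : d_i >= i - 1 }; with j = i - 1 (0-based): max{ j+1 : d_j >= j }. *)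
Definition mval (d : seq nat) : nat :=
  \max_(j < size d | j <= nth 0 d j) j.+1.

Definition Delta (k : nat) (d : seq nat) : int :=
  ((k * (k - 1))%:Z + (\sum_(k <= j < size d) minn k (nth 0 d j))%:Z
   - (\sum_(j < k) nth 0 d j)%:Z)%R.

From mathcomp Require Import all_boot all_order all_algebra zify.
Import Order.TTheory GRing.Theory Num.Theory.
Set Implicit Arguments. Unset Strict Implicit.

(* For a sequence s and k >= 0 put
     excess s k = k(k-1) + sum_i s_i - 2 * (s_1 + ... + s_k).
   1. Sequences.  If s is nonincreasing, k |-> excess s k decreases while
      s_{k+1} >= k and increases afterwards, so its minimum is attained at
      k = m(s); moreover Delta_{m(s)}(s) = excess s (m(s)), since
      min(m, s_i) = s_i for i > m(s).
   2. Graphs.  For a vertex set K of a simple graph G with |K| = k,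
        k(k-1) + sum_{v notin K} deg v - sum_{v in K} deg v
          = #(nonadjacent ordered pairs in K) + #(adjacent ordered pairs off K).
      Hence excess (degseq G) |K| is at most this count, with equality when K
      consists of |K| vertices of largest degree.
   3. Both counts can only decrease when passing to an induced subgraph H and
      the trace of K on H.  Taking K = the m(d) top vertices of G gives
        Delta(e) = excess e m(e) <= excess e |K cap H| <= counts in H
                 <= counts in G = excess d m(d) = Delta(d). *)

(** * Nonincreasing sequences of naturals *)

Definition excess (s : seq nat) (k : nat) : int :=
  ((k * (k - 1))%:Z + (sumn s)%:Z - 2 * (sumn (take k s))%:Z)%R.

Lemma sum_take_nth (s : seq nat) (k : nat) :
  \sum_(j < k) nth 0 s j = sumn (take k s).
Proof.
elim: s k => [|x s IH] [|k].
- by rewrite big_ord0.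
- by rewrite big1 // => j _; rewrite nth_nil.
- by rewrite big_ord0.
- by rewrite big_ord_recl /= -IH.
Qed.

Lemma nth_sorted_geq (s : seq nat) (i j : nat) :
  sorted geq s -> i <= j -> nth 0 s j <= nth 0 s i.
Proof.
move=> s_sorted le_ij; case: (ltnP j (size s)) => js; last by rewrite nth_default.
apply: (sorted_leq_nth (fun a b c H1 H2 => leq_trans H2 H1) leqnn) => //;
  rewrite inE; lia.
Qed.

Lemma sumn_take_behead (x : nat) (s : seq nat) (k : nat) :
  sorted geq (x :: s) -> sumn (take k s) <= sumn (take k (x :: s)).
Proof.
elim: s x k => [|y s IH] x [|k] //= /andP[le_yx s_sorted].
by have := IH y k s_sorted; rewrite /= in le_yx *; lia.
Qed.

Lemma sumn_subseq_le (s t : seq nat) :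
  sorted geq s -> subseq t s -> sumn t <= sumn (take (size t) s).
Proof.
elim: s t => [|x s IH] t s_sorted; first by move/eqP=> ->.
have s'_sorted : sorted geq s by move: s_sorted => /= /path_sorted.
case: t => [|y t] //=; case: eqP => [->|_] sub_t.
  by rewrite leq_add2l; apply: IH.
have := IH (y :: t) s'_sorted sub_t.
by have := sumn_take_behead (size t).+1 s_sorted; rewrite /=; lia.
Qed.

Lemma mval_le_size (s : seq nat) : mval s <= size s.
Proof. by apply/bigmax_leqP => j _. Qed.

Lemma nth_lt_mval (s : seq nat) (j : nat) :
  sorted geq s -> j < mval s -> j <= nth 0 s j.
Proof.
move=> s_sorted lt_jm; rewrite leqNgt; apply/negP => lt_sj.
suff : mval s <= j by lia.
apply/bigmax_leqP => i le_i_si; case: (ltnP i j) => // le_ji.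
by have := nth_sorted_geq s_sorted le_ji; lia.
Qed.

Lemma nth_ge_mval (s : seq nat) (j : nat) :
  sorted geq s -> mval s <= j -> nth 0 s j <= mval s.
Proof.
move=> s_sorted le_mj.
case: (ltnP j (size s)) => js; last by rewrite nth_default.
have ms : mval s < size s by lia.
have := nth_sorted_geq s_sorted le_mj.
case: (leqP (mval s) (nth 0 s (mval s))) => [Hm|]; last by lia.
have := @leq_bigmax_cond _ (fun i : 'I_(size s) => i <= nth 0 s i)
  (fun i : 'I_(size s) => (nat_of_ord i).+1) (Ordinal ms) Hm.
by rewrite /mval /=; lia.
Qed.

Lemma excessS (s : seq nat) (k : nat) :
  excess s k.+1 = (excess s k + 2 * k%:Z - 2 * (nth 0%N s k)%:Z)%R.
Proof.
rewrite /excess -!sum_take_nth big_ord_recr /=.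
set S := \sum_(i < k) _; rewrite subn1 /=.
by case: k S => [|k] S /=; nia.
Qed.

Lemma excess_mval_min (s : seq nat) (k : nat) :
  sorted geq s -> (excess s (mval s) <= excess s k)%R.
Proof.
move=> s_sorted; set m := mval s.
have down i : i <= m -> (excess s m <= excess s (m - i))%R.
  elim: i => [|i IH] le_im; first by rewrite subn0.
  have := IH (ltnW le_im); have := excessS s (m - i.+1).
  have -> : (m - i.+1).+1 = m - i by lia.
  have := @nth_lt_mval s (m - i.+1) s_sorted ltac:(rewrite /m; lia); lia.
have up i : (excess s m <= excess s (m + i))%R.
  elim: i => [|i IH]; first by rewrite addn0.
  have := excessS s (m + i); rewrite addnS.
  have := @nth_ge_mval s (m + i) s_sorted ltac:(rewrite /m; lia); lia.
case: (leqP k m) => km.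
  by have := down (m - k) (leq_subr _ _); have -> : m - (m - k) = k by lia.
by have := up (k - m); have -> : m + (k - m) = k by lia.
Qed.

(* At k = m(s) the truncations min(k, s_i), i > k, are void: Delta = excess. *)
Lemma Delta_mval_excess (s : seq nat) :
  sorted geq s -> Delta (mval s) s = excess s (mval s).
Proof.
move=> s_sorted; rewrite /Delta /excess; set m := mval s.
rewrite (@eq_big_nat _ _ _ _ _ _ (nth 0 s)); last first.
  by move=> j /andP[le_mj _]; apply/minn_idPr; apply: nth_ge_mval.
have split_sum : sumn s = \sum_(0 <= j < m) nth 0 s j + \sum_(m <= j < size s) nth 0 s j.
  by rewrite -big_cat_nat ?mval_le_size //= big_mkord sum_take_nth take_size.
by rewrite split_sum big_mkord sum_take_nth; lia.
Qed.

(** * Degree counting in a simple graph *)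

Section DegreeCounting.
Variable n : nat.
Implicit Types (g : rel 'I_n) (K : {pred 'I_n}).

Lemma gdegE g v : gdeg g v = \sum_u (g v u : nat).
Proof.
rewrite /gdeg -sum1_card big_mkcond /=; apply: eq_bigr => u _.
by rewrite inE; case: (g v u).
Qed.

Definition nonedges_in g K : nat :=
  \sum_(v in K) \sum_(u in K) ((v != u) && ~~ g v u : nat).

Definition edges_out g K : nat :=
  \sum_(v | v \notin K) \sum_(u | u \notin K) (g v u : nat).

(* Double counting: the degree sums over K and off K split into adjacencies
   inside K, between K and its complement, and off K. *)
Lemma degree_identity g K : simple_graph g ->
  #|K| * (#|K| - 1) + \sum_(v | v \notin K) gdeg g v
  = \sum_(v in K) gdeg g v + (nonedges_in g K + edges_out g K).
Proof.
move=> [irr sym].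
have pairs_in : \sum_(v in K) \sum_(u in K) ((v != u) : nat) = #|K| * (#|K| - 1).
  rewrite -sum_nat_const; apply: eq_bigr => v vK.
  rewrite (cardD1 v) vK add1n subn1 /= (bigD1 v) //= eqxx add0n -sum1_card.
  apply: eq_big => [u|u /andP[_ uv]]; first by rewrite !inE andbC.
  by rewrite eq_sym uv.
have neq_split v u : ((v != u) : nat) = g v u + ((v != u) && ~~ g v u).
  by case: eqP => [->|_]; [rewrite irr | case: (g v u)].
have deg_split v : gdeg g v =
    \sum_(u in K) (g v u : nat) + \sum_(u | u \notin K) (g v u : nat).
  by rewrite gdegE (bigID (mem K)).
have cross : \sum_(v | v \notin K) \sum_(u in K) (g v u : nat) =
             \sum_(v in K) \sum_(u | u \notin K) (g v u : nat).
  by rewrite exchange_big /=; apply: eq_bigr => v _; apply: eq_bigr => u _; rewrite sym.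
have in_deg : \sum_(v in K) gdeg g v = \sum_(v in K) \sum_(u in K) (g v u : nat)
    + \sum_(v in K) \sum_(u | u \notin K) (g v u : nat).
  by rewrite -big_split; apply: eq_bigr => v _; apply: deg_split.
have out_deg : \sum_(v | v \notin K) gdeg g v =
    \sum_(v | v \notin K) \sum_(u in K) (g v u : nat) + edges_out g K.
  by rewrite -big_split; apply: eq_bigr => v _; apply: deg_split.
have in_pairs : \sum_(v in K) \sum_(u in K) ((v != u) : nat) =
    \sum_(v in K) \sum_(u in K) (g v u : nat) + nonedges_in g K.
  rewrite -big_split; apply: eq_bigr => v _.
  by rewrite -big_split; apply: eq_bigr => u _; apply: neq_split.
by rewrite -pairs_in in_deg out_deg in_pairs cross; lia.
Qed.

Lemma size_degseq g : size (degseq g) = n.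
Proof. by rewrite /degseq size_sort size_map size_enum_ord. Qed.

Lemma sumn_degseq g : sumn (degseq g) = \sum_v gdeg g v.
Proof.
by rewrite /degseq sumnE (perm_big _ (permEl (perm_sort _ _))) big_map big_enum.
Qed.

Lemma sorted_degseq g : sorted geq (degseq g).
Proof. by apply: sort_sorted => x y; apply: leq_total. Qed.

Lemma degree_ordering g : exists s : seq 'I_n,
  [/\ uniq s, forall v, v \in s & degseq g = map (gdeg g) s].
Proof.
exists (sort (relpre (gdeg g) geq) (enum 'I_n)); split.
- by rewrite sort_uniq enum_uniq.
- by move=> v; rewrite mem_sort mem_enum.
- by rewrite /degseq sort_map.
Qed.

Lemma sum_deg_le_top g K :
  \sum_(v in K) gdeg g v <= sumn (take #|K| (degseq g)).
Proof.
have [t [t_uniq t_all t_deg]] := degree_ordering g.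
have sum_t (P : pred 'I_n) (F : 'I_n -> nat) :
    \sum_(v <- t | P v) F v = \sum_(v | P v) F v.
  apply: perm_big; apply: uniq_perm; rewrite ?index_enum_uniq // => v.
  by rewrite t_all mem_index_enum.
have -> : \sum_(v in K) gdeg g v = sumn (map (gdeg g) (filter (mem K) t)).
  by rewrite sumnE big_map big_filter sum_t.
have -> : #|K| = size (map (gdeg g) (filter (mem K) t)).
  by rewrite size_map size_filter -sum1_count sum_t sum1_card.
apply: sumn_subseq_le; first exact: sorted_degseq.
by rewrite t_deg; apply/map_subseq/filter_subseq.
Qed.

Lemma counts_eq g K : simple_graph g ->
  ((nonedges_in g K + edges_out g K)%:Z = (#|K| * (#|K| - 1))%:Z
     + (sumn (degseq g))%:Z - 2 * (\sum_(v in K) gdeg g v)%:Z)%R.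
Proof.
move=> g_simple; have := degree_identity K g_simple.
by rewrite sumn_degseq [\sum_v _](bigID (mem K)) /=; lia.
Qed.

Lemma excess_le_counts g K : simple_graph g ->
  (excess (degseq g) #|K| <= (nonedges_in g K + edges_out g K)%:Z)%R.
Proof.
move=> g_simple; rewrite counts_eq // /excess.
by have := sum_deg_le_top g K; lia.
Qed.

Lemma excess_top_counts g k : simple_graph g -> k <= n ->
  exists K : {pred 'I_n},
    #|K| = k /\ (excess (degseq g) k = (nonedges_in g K + edges_out g K)%:Z)%R.
Proof.
move=> g_simple le_kn; have [s [s_uniq _ s_deg]] := degree_ordering g.
have size_s : size s = n by rewrite -(size_map (gdeg g)) -s_deg size_degseq.
pose top : {pred 'I_n} := [pred v | v \in take k s].
have card_top : #|top| = k.
  have -> : #|top| = #|take k s| by apply: eq_card => v; rewrite inE.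
  by rewrite (card_uniqP (take_uniq k s_uniq)) size_takel // size_s.
exists top; split => //; rewrite counts_eq // card_top /excess.
suff -> : \sum_(v in top) gdeg g v = sumn (take k (degseq g)) by [].
by rewrite s_deg -map_take sumnE big_map big_uniq ?take_uniq.
Qed.
End DegreeCounting.

(** * Induced subgraphs *)

Lemma sum_inj_le (p n : nat) (f : 'I_p -> 'I_n) (P : pred 'I_n) (F : 'I_n -> nat) :
  injective f -> \sum_(v | P (f v)) F (f v) <= \sum_(w | P w) F w.
Proof.
move=> f_inj.
have -> : \sum_(v | P (f v)) F (f v) = \sum_(v in [set v | P (f v)]) F (f v).
  by apply: eq_bigl => v; rewrite inE.
rewrite -big_imset; last by move=> x y _ _; apply: f_inj.
rewrite big_mkcond [X in _ <= X]big_mkcond /=; apply: leq_sum => w _.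
by case: imsetP => // [[v]]; rewrite inE => Pv ->; rewrite Pv.
Qed.

Section InducedSubgraph.
Variables (p n : nat) (h : rel 'I_p) (g : rel 'I_n) (f : 'I_p -> 'I_n).
Hypothesis f_inj : injective f.
Hypothesis f_induced : forall x y, h x y = g (f x) (f y).
Variable K : {pred 'I_n}.

Definition trace : {pred 'I_p} := [pred v | f v \in K].

Lemma nonedges_in_induced : nonedges_in h trace <= nonedges_in g K.
Proof.
rewrite /nonedges_in (eq_bigl (fun v => f v \in K)) => [|v]; last by rewrite inE.
apply: leq_trans (sum_inj_le (fun w => w \in K)
  (fun w => \sum_(u in K) ((w != u) && ~~ g w u : nat)) f_inj).
apply: leq_sum => v _.
rewrite (eq_bigl (fun u => f u \in K)) => [|u]; last by rewrite inE.
rewrite (eq_bigr (fun u => ((f v != f u) && ~~ g (f v) (f u)) : nat)) => [|u _];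
  last by rewrite (inj_eq f_inj) f_induced.
exact: (sum_inj_le (fun w => w \in K) (fun w => ((f v != w) && ~~ g (f v) w) : nat)).
Qed.

Lemma edges_out_induced : edges_out h trace <= edges_out g K.
Proof.
rewrite /edges_out (eq_bigl (fun v => f v \notin K)) => [|v]; last by rewrite inE.
apply: leq_trans (sum_inj_le (fun w => w \notin K)
  (fun w => \sum_(u | u \notin K) (g w u : nat)) f_inj).
apply: leq_sum => v _.
rewrite (eq_bigl (fun u => f u \notin K)) => [|u]; last by rewrite inE.
rewrite (eq_bigr (fun u => (g (f v) (f u)) : nat)) => [|u _]; last by rewrite f_induced.
exact: (sum_inj_le (fun w => w \notin K) (fun w => (g (f v) w) : nat)).
Qed.
End InducedSubgraph.

Theorem theorem12 (e d : seq nat) :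
  is_degseq e -> is_degseq d -> rao_le e d ->
  (Delta (mval e) e <= Delta (mval d) d)%R.
Proof.
move=> _ _ [p [n [h [g [f [[h_simple <-] [g_simple <-] f_inj f_induced]]]]]].
have le_mn : mval (degseq g) <= n.
  by have := mval_le_size (degseq g); rewrite size_degseq.
have [K [_ excess_top]] := excess_top_counts g_simple le_mn.
rewrite !Delta_mval_excess ?sorted_degseq // excess_top.
apply: le_trans (excess_mval_min #|trace f K| (sorted_degseq h)) _.
apply: le_trans (excess_le_counts (trace f K) h_simple) _.
rewrite lez_nat leq_add //.
- exact: nonedges_in_induced.
- exact: edges_out_induced.
Qed.
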